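(* Let $\mathcal N$ be an irreducible SDAN and let $n\neq n_f$ be an atom of $\mathcal N$ with more than one outcome. Then every agent of $A$ is a party of $n$.
   Context: Fix a finite nonempty set $A$ of agents; each $a\in A$ has a nonempty set $Q_a$ of internal states, $Q_A=\prod_{a\in A}Q_a$. A transformer is a left-total relation on $Q_A$; for $S\subseteq A$ an $S$-transformer is one with $(q,q')\in\tau\Rightarrow q_a=q'_a$ for all $a\notin S$. An atom is $n=(P_n,R_n,\delta_n)$: $P_n\subseteq A$ nonempty (parties), $R_n$ finite nonempty (outcomes), $\delta_n$ assigns to each $r\in R_n$ a $P_n$-transformer $\langle n,r\rangle$. A negotiation is $\mathcal N=(N,n_0,n_f,\mathcal X)$ with $N$ a finite set of atoms, $n_0,n_f\in N$ (possibly equal), $T(N)=\{(n,a,r): n\in N,a\in P_n,r\in R_n\}$, $\mathcal X:T(N)\to 2^N$, such that every agent is a party of $n_0$ and of $n_f$, and $\mathcal X(n,a,r)=\emptyset$ iff $n=n_f$. Its graph has vertices $N$ and edges $(n,n')$ whenever $n'\in\mathcal X(n,a,r)$ for some $(n,a,r)$; $\mathcal N$ is acyclic if the graph has no cycle. A marking is $x:A\to 2^N$; initial $x_0(a)=\{n_0\}$, final $x_f(a)=\emptyset$. $x$ enables $n$ if $n\in x(a)$ for all $a\in P_n$; then for $r\in R_n$ the step $(n,r)$ leads to $x'$ with $x'(a)=\mathcal X(n,a,r)$ for $a\in P_n$, $x'(a)=x(a)$ otherwise. A large step is a finite occurrence sequence from $x_0$ to $x_f$. $\mathcal N$ is sound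 if every atom is enabled at some reachable marking and every occurrence sequence from $x_0$ is a large step or can be extended to one. An agent $a$ is deterministic if for each $(n,a,r)\in T(N)$ with $n\ne n_f$, $\mathcal X(n,a,r)$ is a singleton; $\mathcal N$ is deterministic if all agents are deterministic. An SDAN is a sound, deterministic, acyclic negotiation. Merge rule. Guard: some atom $n$ has distinct outcomes $r_1,r_2$ with $\mathcal X(n,a,r_1)=\mathcal X(n,a,r_2)$ for all $a\in P_n$. Action: replace $r_1,r_2$ in $R_n$ by a fresh outcome $r_f$ with $\mathcal X(n,a,r_f)=\mathcal X(n,a,r_1)$ for $a\in P_n$ and $\langle n,r_f\rangle=\langle n,r_1\rangle\cup\langle n,r_2\rangle$. $(n,r)$ unconditionally enables $n'$ if $P_n\supseteq P_{n'}$ and $\mathcal X(n,a,r)=\{n'\}$ for all $a\in P_{n'}$. d-shortcut rule. Guard: atoms $n\neq n'$ and $r\in R_n$ such that $(n,r)$ unconditionally enables $n'$; $n'$ has at most one outcome; and if $n'\in\mathcal X(\tilde n,\tilde a,\tilde r)$ for at least one $(\tilde n,\tilde a,\tilde r)\in T(N)$ with $\tilde n\neq n$, then $\{n'\}=\mathcal X(\tilde n,\tilde a,\tilde r)$ for some $(\tilde n,\tilde a,\tilde r)\in T(N)$ with $\tilde n\ne n$. Action: (1) replace $R_n$ by $(R_n\setminus\{r\})\cup\{r'_f:r'\in R_{n'}\}$ with fresh names; (2) for $a\in P_{n'}$ set $\mathcal X(n,a,r'_f)=\mathcal X(n',a,r')$, for $a\in P_n\setminus P_{n'}$ set $\mathcal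 X(n,a,r'_f)=\mathcal X(n,a,r)$; (3) $\langle n,r'_f\rangle=\langle n,r\rangle\langle n',r'\rangle$ (relational composition); (4) if afterwards $n'\notin\mathcal X(\tilde n,\tilde a,\tilde r)$ for all $(\tilde n,\tilde a,\tilde r)\in T(N)$, remove $n'$. An SDAN is irreducible if neither the merge rule nor the d-shortcut rule can be applied to it. *)

From mathcomp Require Import all_boot.
Set Implicit Arguments.
Unset Strict Implicit.
Unset Printing Implicit Defensive.

Definition gstate (Ag : finType) (Q : Ag -> Type) := forall a : Ag, Q a.

Record negotiation (Ag : finType) (Q : Ag -> Type) := Negotiation {
  atom : finType;
  parties : atom -> {set Ag};
  outcome : atom -> finType;
  trans : forall n, outcome n -> (forall a : Ag, Q a) -> (forall a : Ag, Q a) -> Prop;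
  nxt : forall n, Ag -> outcome n -> {set atom};    (* X(n,a,r), used for a in P_n *)
  n0 : atom;
  nf : atom
}.
Arguments negotiation : clear implicits.
Arguments atom {Ag Q} _.
Arguments parties {Ag Q} _ _.
Arguments outcome {Ag Q} _ _.
Arguments trans {Ag Q} _ {n} _ _ _.
Arguments nxt {Ag Q} _ _ _ _.
Arguments n0 {Ag Q} _.
Arguments nf {Ag Q} _.

Section Negotiations.
Variables (Ag : finType) (Q : Ag -> Type) (Ng : negotiation Ag Q).

Local Notation N := (atom Ng).
Local Notation P := (parties Ng).
Local Notation R := (outcome Ng).
Local Notation X := (nxt Ng).

Definition transformer_for (S : {set Ag}) (tau : (forall a : Ag, Q a) -> (forall a : Ag, Q a) -> Prop) :=
  (forall q, exists q', tau q q') /\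
  (forall q q', tau q q' -> forall a, a \notin S -> q a = q' a).

Definition is_negotiation : Prop :=
  0 < #|Ag| /\
  (forall a, inhabited (Q a)) /\
  (forall n : N, P n != set0) /\
  (forall n : N, 0 < #|R n|) /\
  (forall (n : N) (r : R n), transformer_for (P n) (trans Ng r)) /\
  P (n0 Ng) = [set: Ag] /\ P (nf Ng) = [set: Ag] /\
  (forall (n : N) a (r : R n), a \in P n -> (X n a r == set0) = (n == nf Ng)).

Definition edge : rel N :=
  fun n n' => [exists a in P n, exists r : R n, n' \in X n a r].

Definition acyclic : Prop :=
  forall n n' : N, edge n n' -> ~~ connect edge n' n.

Definition deterministic : Prop :=
  forall (n : N) a (r : R n), n != nf Ng -> a \in P n -> #|X n a r| = 1%N.

Definition marking := {ffun Ag -> {set N}}.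
Definition init_marking : marking := [ffun _ => [set n0 Ng]].
Definition final_marking : marking := [ffun _ => set0].

Definition enabled (x : marking) (n : N) := [forall a in P n, n \in x a].

Definition fire (x : marking) (n : N) (r : R n) : marking :=
  [ffun a => if a \in P n then X n a r else x a].

Definition step_t := {n : N & R n}.

(* [run x s = Some y] iff the sequence of steps [s] is an occurrence
   sequence from [x] leading to [y] *)
Fixpoint run (x : marking) (s : seq step_t) : option marking :=
  match s with
  | [::] => Some x
  | st :: s' => if enabled x (tag st) then run (fire x (tagged st)) s' else None
  end.

Definition reachable (x : marking) := exists s, run init_marking s = Some x.

Definition sound : Prop :=
  (forall n : N, exists x, reachable x /\ enabled x n) /\
  (forall s x, run init_marking s = Some x ->
     exists s', run x s' = Some final_marking).

Definition SDAN : Prop := sound /\ deterministic /\ acyclic.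

Definition merge_applicable : Prop :=
  exists (n : N) (r1 r2 : R n), r1 != r2 /\
    forall a, a \in P n -> X n a r1 = X n a r2.

Definition uncond_enables (n : N) (r : R n) (n' : N) : Prop :=
  P n' \subset P n /\ forall a, a \in P n' -> X n a r = [set n'].

Definition dshortcut_applicable : Prop :=
  exists (n n' : N) (r : R n),
    n != n' /\ uncond_enables r n' /\ #|R n'| <= 1 /\
    ((exists (nt : N) (at_ : Ag) (rt : R nt),
        [/\ at_ \in P nt, nt != n & n' \in X nt at_ rt]) ->
     exists (nt : N) (at_ : Ag) (rt : R nt),
        [/\ at_ \in P nt, nt != n & X nt at_ rt = [set n']]).

Definition irreducible : Prop := ~ merge_applicable /\ ~ dshortcut_applicable.

End Negotiations.

From Pilot Require Import Defs.
From mathcomp Require Import all_boot.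
Set Implicit Arguments.
Unset Strict Implicit.
Unset Printing Implicit Defensive.

(* Suppose some atom n <> n_f with several outcomes misses an agent, and take
   n with no such atom strictly below it in the acyclic graph.  Below n every
   atom missing an agent has a single outcome, so by determinism each agent's
   path below n is fixed until it reaches an atom joined by all agents.  Fire n
   with two outcomes r1 <> r2 from a reachable marking at which no atom
   disjoint from the parties of n is enabled; by soundness all agents then stay
   below n.  An agent b outside P n sits at the same atom after r1 and after r2,
   so both runs meet at the same first full atom.  Moreover the non-full atoms
   visited after r1 and after r2 coincide: by induction on ancestors, since
   irreducibility under the d-shortcut rule forbids (n, r) to unconditionally
   enable one of them.  Hence every party of n is sent to the same atom by r1
   and r2, and the merge rule applies, contradicting irreducibility. *)

Lemma connect_split_first (T : finType) (e : rel T) u v :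
  connect e u v -> u = v \/ exists2 z, e u z & connect e z v.
Proof.
case/connectP => [[|z p]] /=; first by left.
case/andP => euz pzp ->; right; exists z => //; apply/connectP; by exists p.
Qed.

Lemma connect_split_last (T : finType) (e : rel T) u v :
  connect e u v -> u = v \/ exists2 z, connect e u z & e z v.
Proof.
case/connectP => p; case/lastP: p => [|p z] /=; first by move=> _ ->; left.
rewrite rcons_path last_rcons => /andP [up ez] ->; right; exists (last u p) => //.
apply/connectP; by exists p.
Qed.

Section Negotiation.
Variables (Ag : finType) (Q : Ag -> Type) (Ng : negotiation Ag Q).
Local Notation N := (atom Ng).
Local Notation P := (parties Ng).
Local Notation R := (outcome Ng).
Local Notation X := (nxt Ng).
Local Notation nf := (nf Ng).
Local Notation edge := (@Defs.edge _ _ Ng).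
Local Notation marking := (@Defs.marking _ _ Ng).
Local Notation final := (@final_marking _ _ Ng).

Hypothesis Ng_neg : is_negotiation Ng.
Hypothesis Ng_det : deterministic Ng.
Hypothesis Ng_acyclic : acyclic Ng.

Definition full (k : N) := P k == setT.

Lemma parties_nf : P nf = setT.
Proof. by case: Ng_neg => _ [_ [_ [_ [_ [_ [-> _]]]]]]. Qed.

Lemma parties_nonempty k : exists a, a \in P k.
Proof.
case: Ng_neg => _ [_ [Pk _]]; have := Pk k.
by rewrite -card_gt0 => /card_gt0P [a Ha]; exists a.
Qed.

Lemma outcome_inhabited k : inhabited (R k).
Proof. case: Ng_neg => _ [_ [_ [Rk _]]]; have := Rk k; by case/card_gt0P. Qed.

Lemma nxt_nf a (r : R nf) : X nf a r = set0.
Proof.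
case: Ng_neg => _ [_ [_ [_ [_ [_ [_ Xnf]]]]]].
by have := Xnf nf a r; rewrite parties_nf inE eqxx => /(_ isT)/eqP.
Qed.

Lemma nxt_set1 k a (r : R k) : k != nf -> a \in P k -> exists s, X k a r = [set s].
Proof. by move=> knf Ha; apply/cards1P; rewrite Ng_det. Qed.

Lemma nonfull_neq_nf k : ~~ full k -> k != nf.
Proof. by apply: contra => /eqP ->; rewrite /full parties_nf. Qed.

Lemma edge_nxt k a (r : R k) s : a \in P k -> s \in X k a r -> edge k s.
Proof. move=> Ha Hs; apply/existsP; exists a; rewrite Ha; apply/existsP; by exists r. Qed.

Lemma edge_irrefl k : ~~ edge k k.
Proof. by apply/negP => ekk; move: (Ng_acyclic ekk); rewrite connect0. Qed.

Lemma connect_antisym u v : connect edge u v -> connect edge v u -> u = v.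
Proof.
case/connect_split_first => [//|[z euz czv] cvu].
by move: (Ng_acyclic euz); rewrite (connect_trans czv cvu).
Qed.

Definition ndesc (k : N) := #|[set k' | connect edge k k']|.
Definition nanc (k : N) := #|[set k' | connect edge k' k]|.

Lemma ndesc_gt0 k : 0 < ndesc k.
Proof. by apply/card_gt0P; exists k; rewrite inE connect0. Qed.

Lemma ndesc_connect k s : connect edge k s -> ndesc s <= ndesc k.
Proof.
move=> cks; apply: subset_leq_card; apply/subsetP => z; rewrite !inE.
exact: connect_trans cks.
Qed.

Lemma ndesc_edge k s : edge k s -> ndesc s < ndesc k.
Proof.
move=> eks; apply: proper_card; apply/properP; split.
  by apply/subsetP => z; rewrite !inE; apply: connect_trans (connect1 eks).
by exists k; rewrite !inE ?connect0 //; apply: Ng_acyclic.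
Qed.

Lemma nanc_edge k s : edge k s -> nanc k < nanc s.
Proof.
move=> eks; apply: proper_card; apply/properP; split.
  by apply/subsetP => z; rewrite !inE => czk; apply: connect_trans czk (connect1 eks).
by exists s; rewrite !inE ?connect0 //; apply: Ng_acyclic.
Qed.

Lemma exists_maximal (p : pred N) m :
  p m -> exists2 n, p n & forall k, connect edge n k -> k != n -> ~~ p k.
Proof.
elim: {m}(ndesc m).+1 {-2}m (ltnSn (ndesc m)) => // d IH m ltmd pm.
case: (pickP (fun k => [&& connect edge m k, k != m & p k])) => [k /and3P [cmk km pk]|none].
  apply: (IH k) => //; case: (connect_split_first cmk) => [eq_mk|[z emz czk]].
    by rewrite eq_mk eqxx in km.
  exact: leq_trans (leq_ltn_trans (ndesc_connect czk) (ndesc_edge emz)) ltmd.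
by exists m => // k cmk km; move: (none k); rewrite cmk km /= => ->.
Qed.


Lemma fireE (x : marking) k (r : R k) a :
  fire x r a = if a \in P k then X k a r else x a.
Proof. by rewrite ffunE. Qed.

Lemma enabledP (x : marking) k : reflect (forall a, a \in P k -> k \in x a) (enabled x k).
Proof. exact: forall_inP. Qed.

Lemma enabled_set1 (x : marking) k a ka : enabled x k -> a \in P k -> x a = [set ka] -> ka = k.
Proof. by move=> /enabledP en Ha xa; move: (en a Ha); rewrite xa inE => /eqP. Qed.

Lemma run_cat (x : marking) s1 s2 :
  run x (s1 ++ s2) = if run x s1 is Some y then run y s2 else None.
Proof. by elim: s1 x => [|[k r] s1 IH] x //=; case: (enabled x k). Qed.

Lemma reachable_fire (x : marking) k (r : R k) :
  reachable x -> enabled x k -> reachable (fire x r).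
Proof. by case=> s xs en; exists (rcons s (existT _ k r)); rewrite -cats1 run_cat xs /= en. Qed.

Lemma final_neq_set1 c k : final c <> [set k].
Proof. by rewrite /final_marking ffunE => /setP /(_ k); rewrite !inE eqxx. Qed.

Lemma run_final_party (x : marking) s c k :
  run x s = Some final -> x c = [set k] -> c \in P k.
Proof.
elim: s x => [|[k0 r] s IH] x /=; first by case=> -> /final_neq_set1.
case en: (enabled x k0) => // xs xc.
case c0: (c \in P k0); first by rewrite (enabled_set1 en c0 xc).
by apply: IH xs _; rewrite fireE c0.
Qed.

Definition singleton_marking (x : marking) := forall a, exists k, x a = [set k].

Lemma run_singleton_or_empty (x y : marking) s :
  run x s = Some y -> (forall a, x a = set0) \/ singleton_marking x ->
  (forall a, y a = set0) \/ singleton_marking y.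
Proof.
elim: s x => [|[k r] s IH] x /=; first by case=> ->.
case en: (enabled x k) => // xs Hx; apply: (IH _ xs).
case: Hx => [x0|x1].
  by case: (parties_nonempty k) => a Ha; move/enabledP: en => /(_ a Ha); rewrite x0 inE.
case: (eqVneq k nf) => [knf|knf].
  by subst k; left => a; rewrite fireE parties_nf inE nxt_nf.
by right => a; rewrite fireE; case: ifP => Ha; [exact: nxt_set1 | exact: x1].
Qed.

Lemma reachable_singleton (x : marking) k : reachable x -> enabled x k -> singleton_marking x.
Proof.
case=> s xs en; case: (run_singleton_or_empty xs) => [|x0|//].
  by right => a; exists (n0 Ng); rewrite ffunE.
by case: (parties_nonempty k) => a Ha; move/enabledP: en => /(_ a Ha); rewrite x0 inE.
Qed.

Definition potential (x : marking) := \sum_(a : Ag) \sum_(m in x a) ndesc m.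

Lemma potential_fire (x : marking) k (r : R k) :
  singleton_marking x -> enabled x k -> potential (fire x r) < potential x.
Proof.
move=> x1 en.
have party_lt a : a \in P k -> \sum_(m in fire x r a) ndesc m < \sum_(m in x a) ndesc m.
  move=> Ha; case: (x1 a) => ka xa; have eka := enabled_set1 en Ha xa; subst ka.
  rewrite fireE Ha xa big_set1; case: (eqVneq k nf) => [knf|knf].
    by move: r en Ha xa; rewrite knf => r _ _ _; rewrite nxt_nf big_set0 ndesc_gt0.
  case: (nxt_set1 r knf Ha) => z Xz; rewrite Xz big_set1; apply: ndesc_edge.
  by apply: (@edge_nxt k a r) => //; rewrite Xz inE.
case: (parties_nonempty k) => a0 Ha0.
rewrite /potential (bigD1 a0) // [X in _ < X](bigD1 a0) //= -addSn.
apply: leq_add; first exact: party_lt.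
apply: leq_sum => a _; case: (boolP (a \in P k)) => Ha; first exact: ltnW (party_lt a Ha).
by rewrite fireE (negbTE Ha).
Qed.


(* Moves out of full atoms are excluded: a full atom synchronises all agents,
   so it is where their paths are compared. *)
Definition lstep (c : Ag) : rel N :=
  fun k s => ~~ full k && (c \in P k) && [exists r : R k, s \in X k c r].

Lemma lstepI k c (r : R k) z : ~~ full k -> c \in P k -> X k c r = [set z] -> lstep c k z.
Proof. by move=> kf Hc Xz; rewrite /lstep kf Hc; apply/existsP; exists r; rewrite Xz inE. Qed.

Lemma lstep_edge c k s : lstep c k s -> edge k s.
Proof. by case/andP => /andP [_ Hc] /existsP [r Hr]; apply: edge_nxt Hc Hr. Qed.

Lemma connect_lstep_edge c u v : connect (lstep c) u v -> connect edge u v.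
Proof. by apply: connect_sub => x z /lstep_edge; apply: connect1. Qed.

Lemma connect_lstep_full c u v : full u -> connect (lstep c) u v -> v = u.
Proof. by move=> fu /connect_split_first [->|[z]] //; rewrite /lstep fu. Qed.

Lemma run_reaches_full (x : marking) s :
  run x s = Some final -> singleton_marking x ->
  exists2 F, full F & forall c k, x c = [set k] -> connect (lstep c) k F.
Proof.
elim: s x => [|[k0 r] s IH] x /=.
  by case=> -> x1; case: (parties_nonempty nf) => c _; case: (x1 c) => k /final_neq_set1.
case en: (enabled x k0) => // xs x1.
case f0: (full k0).
  exists k0 => // c k xc; move/eqP: f0 => Pk0.
  by rewrite (enabled_set1 en _ xc) ?Pk0 ?inE.
have k0nf : k0 != nf by rewrite nonfull_neq_nf ?f0.
have y1 : singleton_marking (fire x r).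
  by move=> c; rewrite fireE; case: ifP => Hc; [exact: nxt_set1 | exact: x1].
case: (IH _ xs y1) => F fF HF; exists F => // c k xc.
case c0: (c \in P k0); last by apply: HF; rewrite fireE c0.
rewrite (enabled_set1 en c0 xc).
case: (nxt_set1 r k0nf c0) => z Xz.
apply: connect_trans (connect1 (lstepI _ _ Xz)) (HF c z _) => //; first by rewrite f0.
by rewrite fireE c0.
Qed.


Section ClosedRegion.
Variable D : pred N.
Hypothesis D_closed : forall k a (r : R k) s, k \in D -> a \in P k -> s \in X k a r -> s \in D.

Lemma enabled_outside (x : marking) s c k :
  run x s = Some final -> x c = [set k] -> k \notin D ->
  exists2 k', k' \notin D & enabled x k'.
Proof.
elim: s x => [|[k0 r] s IH] x /=; first by case=> -> /final_neq_set1.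
case en: (enabled x k0) => // xs xc kD.
case k0D: (k0 \in D); last by exists k0; rewrite ?k0D.
have c0 : c \notin P k0.
  by apply/negP => c0; move: kD; rewrite (enabled_set1 en c0 xc) k0D.
case: (IH _ xs _ kD); first by rewrite fireE (negbTE c0).
move=> k' k'D /enabledP en'; exists k' => //; apply/enabledP => a Ha.
move: (en' a Ha); rewrite fireE; case: ifP => // a0 k'X.
by rewrite (D_closed k0D a0 k'X) in k'D.
Qed.

Hypothesis D_lstep_fun : forall c k s1 s2, k \in D -> lstep c k s1 -> lstep c k s2 -> s1 = s2.

Lemma connect_lstep_full_unique c u F1 F2 :
  u \in D -> connect (lstep c) u F1 -> connect (lstep c) u F2 -> full F1 -> full F2 -> F1 = F2.
Proof.
move=> uD /connectP [p lp ->] {F1}; elim: p u uD lp => [|z p IH] u uD /=.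
  by move=> _ cF2 fu _; rewrite (connect_lstep_full fu cF2).
case/andP => uz lp cF2 fF1 fF2.
case: (connect_split_first cF2) => [eq_uF2|[z' uz' cz'F2]].
  by subst u; move: uz; rewrite /lstep fF2.
rewrite -(D_lstep_fun uD uz uz') in cz'F2; apply: IH => //.
by case/andP: uz => /andP [_ Hc] /existsP [r Hr]; apply: D_closed Hr.
Qed.

Definition located_in (x : marking) := forall c, exists2 k, x c = [set k] & k \in D.

(* Since the run completes, [k] eventually occurs, so each of its parties
   must get there. *)
Lemma lstep_reaches_parties (x : marking) s :
  run x s = Some final -> located_in x ->
  forall k c kc, ~~ full k -> x c = [set kc] -> connect (lstep c) kc k ->
  forall c' kc', c' \in P k -> x c' = [set kc'] -> connect (lstep c') kc' k.
Proof.
elim: s x => [|[k0 r] s IH] x /=.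
  by case=> -> xD; case: (parties_nonempty nf) => c _; case: (xD c) => k /final_neq_set1.
case en: (enabled x k0) => // xs xD k c kc kf xc ckc c' kc' c'k xc'.
case f0: (full k0).
  have c0 : c \in P k0 by move/eqP: f0 => ->; rewrite inE.
  rewrite (enabled_set1 en c0 xc) in ckc.
  by move: kf; rewrite (connect_lstep_full f0 ckc) f0.
have k0nf : k0 != nf by rewrite nonfull_neq_nf ?f0.
have yD : located_in (fire x r).
  move=> a; rewrite fireE; case: ifP => Ha; last exact: xD.
  case: (nxt_set1 r k0nf Ha) => z Xz; exists z => //.
  case: (xD a) => ka xa kaD; rewrite (enabled_set1 en Ha xa) in kaD.
  have zX : z \in X k0 a r by rewrite Xz inE.
  exact: D_closed kaD Ha zX.
have back a ka : x a = [set ka] -> exists2 kb, fire x r a = [set kb] &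
    forall v, connect (lstep a) kb v -> connect (lstep a) ka v.
  move=> xa; case Ha: (a \in P k0); last by exists ka => //; rewrite fireE Ha.
  case: (nxt_set1 r k0nf Ha) => z Xz; exists z; first by rewrite fireE Ha.
  move=> v zv; rewrite (enabled_set1 en Ha xa); apply: connect_trans zv.
  exact: connect1 (lstepI (negbT f0) Ha Xz).
case: (eqVneq k k0) => [eq_kk0|kk0].
  by subst k; rewrite (enabled_set1 en c'k xc') connect0.
case: (back _ _ xc') => kb' yc' /(_ k); apply.
have [c2 [kc2 [yc2 ckc2]]] : exists c2 kc2, fire x r c2 = [set kc2] /\ connect (lstep c2) kc2 k.
  case c0: (c \in P k0); last by exists c, kc; rewrite fireE c0.
  rewrite (enabled_set1 en c0 xc) in ckc.
  case: (connect_split_first ckc) => [eq_k0k|[z' k0z' z'k]].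
    by rewrite eq_k0k eqxx in kk0.
  case: (nxt_set1 r k0nf c0) => z Xz; exists c, z; split; first by rewrite fireE c0.
  case: (xD c) => kk xkk kkD; rewrite (enabled_set1 en c0 xkk) in kkD.
  by rewrite (D_lstep_fun kkD k0z' (lstepI (negbT f0) c0 Xz)) in z'k.
exact: (IH _ xs yD k c2 kc2 kf yc2 ckc2 c' kb' c'k yc').
Qed.

End ClosedRegion.


Hypothesis Ng_sound : sound Ng.

Lemma exists_quiet_marking n : exists x,
  [/\ reachable x, enabled x n & forall k, [disjoint P k & P n] -> ~~ enabled x k].
Proof.
case: Ng_sound => live _; case: (live n) => x0 [rx0 ex0].
elim: {x0}(potential x0).+1 {-2}x0 (ltnSn (potential x0)) rx0 ex0 => // d IH x ltxd rx ex.
case: (pickP (fun k => [disjoint P k & P n] && enabled x k)) => [k /andP [dkn ek]|none].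
  case: (outcome_inhabited k) => r; apply: (IH (fire x r)).
  - by rewrite ltnS in ltxd; exact: leq_trans (potential_fire r (reachable_singleton rx ex) ek) ltxd.
  - exact: reachable_fire.
  apply/enabledP => a Ha; rewrite fireE; case: ifP => ak.
    by rewrite (disjointFr dkn ak) in Ha.
  exact: (enabledP _ _ ex).
by exists x; split => // k dkn; move: (none k); rewrite dkn /= => ->.
Qed.

Definition counterexample k := [&& k != nf, 1 < #|R k| & ~~ full k].

Hypothesis Ng_irr : irreducible Ng.

Section MaximalCounterexample.
Variable n : N.
Hypotheses (n_neq_nf : n != nf) (n_nonfull : ~~ full n).
Hypothesis n_maximal : forall k, connect edge n k -> k != n -> ~~ counterexample k.

Definition below : pred N := fun k => connect edge n k && (k != n).

Lemma below_closed k a (r : R k) s : k \in below -> a \in P k -> s \in X k a r -> s \in below.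
Proof.
move=> /andP [nk kn] Ha sX; have ks := edge_nxt Ha sX.
rewrite unfold_in /below (connect_trans nk (connect1 ks)) /=.
by apply/eqP => eq_sn; move: (Ng_acyclic ks); rewrite eq_sn nk.
Qed.

Lemma below_outcomes k : k \in below -> ~~ full k -> #|R k| <= 1.
Proof.
case/andP => nk kn kf; have := n_maximal nk kn.
by rewrite /counterexample nonfull_neq_nf // kf andbT -leqNgt.
Qed.

Lemma below_lstep_fun c k s1 s2 : k \in below -> lstep c k s1 -> lstep c k s2 -> s1 = s2.
Proof.
move=> kb /andP [/andP [kf ck] /existsP [r1 s1X]] /andP [_ /existsP [r2 s2X]].
have eq_r : r2 = r1 by move/card_le1_eqP: (below_outcomes kb kf); apply.
case: (nxt_set1 r1 (nonfull_neq_nf kf) ck) => z Xz.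
by move: s1X s2X; rewrite eq_r Xz !inE => /eqP -> /eqP ->.
Qed.

(* Otherwise the d-shortcut rule would apply to [n], [r] and [k]. *)
Lemma no_uncond_successor (r : R n) k :
  P k \subset P n -> ~ (forall g, g \in P k -> X n g r = [set k]).
Proof.
move=> sub Xk; case: Ng_irr => _; apply.
have nk : edge n k.
  case: (parties_nonempty k) => g Hg; apply: (@edge_nxt n g r k (subsetP sub g Hg)).
  by rewrite Xk // inE.
have kn : k != n by apply: contraTneq nk => ->; apply: edge_irrefl.
have kf : ~~ full k.
  by apply: contra n_nonfull => /eqP Pk; rewrite /full eqEsubset subsetT -Pk.
exists n, k, r; split; first by rewrite eq_sym.
split; first by split.
split; first by apply: below_outcomes kf; rewrite unfold_in /below connect1 // kn.
move=> [nt [at_ [rt [Hat ntn kX]]]]; exists nt, at_, rt; split => //.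
case: (eqVneq nt nf) => [eq_ntnf|ntnf].
  by move: rt kX; rewrite eq_ntnf => rt; rewrite nxt_nf inE.
by case: (nxt_set1 rt ntnf Hat) => z Xz; move: kX; rewrite Xz inE => /eqP ->.
Qed.

Variable x : marking.
Hypotheses (x_reach : reachable x) (x_en : enabled x n).
Hypothesis x_quiet : forall k, [disjoint P k & P n] -> ~~ enabled x k.

Lemma fire_complete (r : R n) : exists s, run (fire x r) s = Some final.
Proof.
case: Ng_sound => _ complete.
by case: (reachable_fire r x_reach x_en) => s xs; apply: complete xs.
Qed.

Lemma succ_below (r : R n) a z : a \in P n -> z \in X n a r -> z \in below.
Proof.
move=> Ha zX; have nz := edge_nxt Ha zX; rewrite unfold_in /below connect1 //=.
by apply: contraTneq nz => ->; apply: edge_irrefl.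
Qed.

(* An agent left outside [below] would require some atom outside [below] to
   occur; its parties avoid [P n], so it would already be enabled at [x]. *)
Lemma fire_located_below (r : R n) : located_in below (fire x r).
Proof.
move=> c; rewrite fireE; case: ifP => Hc.
  case: (nxt_set1 r n_neq_nf Hc) => z Xz; exists z => //.
  by apply: (@succ_below r c z Hc); rewrite Xz inE.
case: (reachable_singleton x_reach x_en c) => k xc; exists k => //.
apply: contraT => kb; case: (fire_complete r) => s ys.
case: (enabled_outside below_closed ys (c := c) _ kb); first by rewrite fireE Hc.
move=> k' k'b /enabledP en'.
have dk' : [disjoint P k' & P n].
  rewrite disjoint_subset; apply/subsetP => a Ha; apply/negP => an.
  move: (en' a Ha); rewrite fireE an => k'X.
  by rewrite (succ_below an k'X) in k'b.
case/negP: (x_quiet dk'); apply/enabledP => a Ha.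
by move: (en' a Ha); rewrite fireE (disjointFr dk' Ha).
Qed.

Lemma fire_lstep_parties (r : R n) k c kc :
  ~~ full k -> fire x r c = [set kc] -> connect (lstep c) kc k ->
  forall c' kc', c' \in P k -> fire x r c' = [set kc'] -> connect (lstep c') kc' k.
Proof.
case: (fire_complete r) => s ys.
exact: (lstep_reaches_parties below_closed below_lstep_fun ys (fire_located_below r)).
Qed.

Definition visited (r : R n) k :=
  ~~ full k /\ exists c kc, fire x r c = [set kc] /\ connect (lstep c) kc k.

(* If all parties of [k] sat in
   [P n] and moved straight to [k], then [(n, r)] would unconditionally enable
   [k]; so some party reaches [k] through an earlier visited atom, or does not
   take part in [n] at all. *)
Lemma visited_outcome_indep (r r' : R n) k : visited r k -> visited r' k.
Proof.
elim: {k}(nanc k).+1 {-2}k (ltnSn (nanc k)) => // d IH k ltkd [kf [c [kc [yc ckc]]]].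
have visited_by c' kc' : c' \in P k -> fire x r' c' = [set kc'] ->
    connect (lstep c') kc' k -> visited r' k.
  by move=> _ yc' ck'; split => //; exists c', kc'.
case: (boolP (P k \subset P n)) => [sub|/subsetPn [b bk bn]]; last first.
  case: (reachable_singleton x_reach x_en b) => kb xb.
  have yb (r0 : R n) : fire x r0 b = [set kb] by rewrite fireE (negbTE bn).
  exact: visited_by bk (yb r') (fire_lstep_parties kf yc ckc bk (yb r)).
case: (pickP (fun g => (g \in P k) && (fire x r g != [set k]))) => [g /andP [gk ygk]|none].
  case: (fire_located_below r g) => kg yg _.
  have ckg := fire_lstep_parties kf yc ckc gk yg.
  case: (connect_split_last ckg) => [eq_kgk|[k' ckg' k'k]].
    by rewrite yg eq_kgk eqxx in ygk.
  have k'f : ~~ full k' by case/andP: k'k => /andP [].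
  have gk' : g \in P k' by case/andP: k'k => /andP [].
  have [_ [c2 [kc2 [yc2 ckc2]]]] : visited r' k'.
    apply: IH; first exact: leq_trans (nanc_edge (lstep_edge k'k)) ltkd.
    by split => //; exists g, kg.
  case: (fire_located_below r' g) => kg2 yg2 _.
  have ck2 := fire_lstep_parties k'f yc2 ckc2 gk' yg2.
  exact: visited_by gk yg2 (connect_trans ck2 (connect1 k'k)).
exfalso; apply: (@no_uncond_successor r k sub) => g gk.
by move: (none g); rewrite gk fireE (subsetP sub g gk) => /negbFE /eqP.
Qed.

Lemma nonfull_succ_reached (r1 r2 : R n) g f1 f2 : g \in P n ->
  X n g r1 = [set f1] -> X n g r2 = [set f2] -> ~~ full f1 -> connect (lstep g) f2 f1.
Proof.
move=> gn X1 X2 f1f.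
have y1 : fire x r1 g = [set f1] by rewrite fireE gn.
have y2 : fire x r2 g = [set f2] by rewrite fireE gn.
have [_ [c [kc [yc ckc]]]] : visited r2 f1.
  by apply: (@visited_outcome_indep r1); split => //; exists g, f1.
case: (fire_complete r1) => s ys.
exact: (fire_lstep_parties f1f yc ckc (run_final_party ys y1) y2).
Qed.

Lemma full_succ_eq (r1 r2 : R n) g f1 f2 : g \in P n ->
  X n g r1 = [set f1] -> X n g r2 = [set f2] -> full f1 -> full f2 -> f1 = f2.
Proof.
move=> gn X1 X2 f1f f2f.
have single (r : R n) : singleton_marking (fire x r).
  by move=> c; case: (fire_located_below r c) => k; exists k.
have reach_full (r : R n) :
    exists2 F, full F & forall c k, fire x r c = [set k] -> connect (lstep c) k F.
  by case: (fire_complete r) => s ys; apply: run_reaches_full ys (single r).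
case: (reach_full r1) => F1 fF1 cF1; case: (reach_full r2) => F2 fF2 cF2.
rewrite -(connect_lstep_full f1f (cF1 g f1 _)) ?fireE ?gn //.
rewrite -(connect_lstep_full f2f (cF2 g f2 _)) ?fireE ?gn //.
have [b _ bn] : exists2 b, b \in [set: Ag] & b \notin P n.
  by apply/subsetPn; rewrite subTset.
case: (fire_located_below r1 b) => kb yb kbb.
have yb' : fire x r2 b = [set kb] by move: yb; rewrite !fireE (negbTE bn).
exact: (connect_lstep_full_unique below_closed below_lstep_fun kbb (cF1 b kb yb) (cF2 b kb yb') fF1 fF2).
Qed.

Lemma nxt_outcome_indep (r1 r2 : R n) g : g \in P n -> X n g r1 = X n g r2.
Proof.
move=> gn.
case: (nxt_set1 r1 n_neq_nf gn) => f1 X1; case: (nxt_set1 r2 n_neq_nf gn) => f2 X2.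
rewrite X1 X2; congr [set _].
case: (boolP (full f1)) => f1f; case: (boolP (full f2)) => f2f.
- exact: full_succ_eq gn X1 X2 f1f f2f.
- exact/esym/(connect_lstep_full f1f)/(nonfull_succ_reached gn X2 X1 f2f).
- exact: connect_lstep_full f2f (nonfull_succ_reached gn X1 X2 f1f).
- apply: connect_antisym; apply: connect_lstep_edge.
  + exact: nonfull_succ_reached gn X2 X1 f2f.
  + exact: nonfull_succ_reached gn X1 X2 f1f.
Qed.

End MaximalCounterexample.

Lemma no_counterexample m : ~~ counterexample m.
Proof.
apply/negP => cm; case: (exists_maximal cm) => n /and3P [n_nf n_out n_nonfull] n_max.
case: (exists_quiet_marking n) => x [rx ex qx].
case/card_gt1P: n_out => r1 [r2 [_ _ r12]].
case: Ng_irr => no_merge _; apply: no_merge; exists n, r1, r2; split => // g gn.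
exact (nxt_outcome_indep n_nf n_nonfull n_max rx ex qx r1 r2 gn).
Qed.

End Negotiation.

Theorem lemma1 (Ag : finType) (Q : Ag -> Type) (Ng : negotiation Ag Q) :
  is_negotiation Ng -> SDAN Ng -> irreducible Ng ->
  forall n : atom Ng, n != nf Ng -> 1 < #|outcome Ng n| ->
  parties Ng n = [set: Ag].
Proof.
move=> neg [sound [det acyc]] irr n nnf n_out; apply/eqP.
have := no_counterexample neg det acyc sound irr n.
by rewrite /counterexample nnf n_out negbK.
Qed.
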